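(* Let $(\mathbf k,\log)$ be an ordered field with surjective logarithm, $(\mathbf k((G)),l)$ a series field with prelogarithmic section, $\psi$ a morphism from $(\mathbf k((G)),l)$ to itself, and $H\ne\{1\}$ a subgroup of $G$ satisfying the growth axiom. Then for every $m\ge0$, $G^0_m$ satisfies the growth axiom, and for every $n\ge0$, $G^{n+1}_m$ is the anti-lexicographic product of $G^n_m$ and $\mathrm{Exp}\,\mathbf k(((G^n_m)^{>G^{n-1}_m}))$. Moreover $\mathrm{Exp}\,\mathbf k(((G^n_m)^{>1}))\subseteq G^{n+1}_m$.
   Context: Let $\mathbf k$ be an ordered field and $(G,\cdot,<)$ a totally ordered abelian group (written multiplicatively). $\mathbf k((G))$ denotes the field of generalized power series $\alpha=\sum_{g\in G}\alpha(g)\,g$ ($\alpha(g)\in\mathbf k$) with anti-well-ordered support, usual operations, canonical valuation $v(\alpha)=\max\operatorname{supp}\alpha$ and ordering $\alpha>0$ iff $\alpha(v(\alpha))>0$; $\mathbf k$, $G$ are identified with subsets of $\mathbf k((G))$. For $S\subseteq G$, $\mathbf k((S))=\{\alpha:\operatorname{supp}\alpha\subseteq S\}$. For a subgroup $H$ and $A\subseteq G$, $H^{>A}=\{h\in H:h>a\ \forall a\in A\}$, $H^{>1}=\{h\in H:h>1\}$. Every $\alpha>0$ is uniquely $\alpha=g\,a(1+\varepsilon)$ with $g=v(\alpha)$, $a\in\mathbf k^{>0}$, $\varepsilon\in\mathbf k((G^{<1}))$. A prelogarithmic section is an order-preserving group embedding $l:(G,\cdot)\to(\mathbf k((G^{>1})),+)$;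 the prelogarithm of $l$ is $L(g\,a(1+\varepsilon))=l(g)+\log a+\sum_{i\ge1}(-1)^{i-1}\varepsilon^i/i$. Exponential extension: $G^\#$ is the ordered abelian group of formal symbols $e(\alpha)$, $\alpha\in\mathbf k((G^{>1}))$, with $e(\alpha)e(\beta)=e(\alpha+\beta)$, $e(\alpha)<e(\beta)\iff\alpha<\beta$, and $e(l(g))$ identified with $g\in G$; $l^\#(e(\alpha))=\alpha$ is a prelogarithmic section of $\mathbf k((G^\#))$ extending $l$. Iterating: $G^{\#n}$, $l^{\#n}$, $L^{\#n}$. The EL-series field is $\mathbf k((G))^{EL}=\bigcup_n\mathbf k((G^{\#n}))$ with $\mathrm{Log}=\bigcup_nL^{\#n}$ and $\mathrm{Exp}=\mathrm{Log}^{-1}$. An order-preserving group embedding $\psi:G\to G$, extended to $\mathbf k((G))$ by $\psi(\sum a_gg)=\sum a_g\psi(g)$, is a morphism of $(\mathbf k((G)),l)$ to itself if $\psi\circ l=l\circ\psi$ on $G$; $\psi^{(m)}$ is its $m$-fold composite. A subgroup $H\ne\{1\}$ of $G$ satisfies the growth axiom if $\mathrm{Log}(h)<|f|$ for all $h\in H$ and all nonzero $f\in\mathbf k((H^{>1}))$. ''Anti-lexicographic product'' of subgroups $A,B$: the group is $A\cdot B$, the product is direct and $A$ is convex in it. LE construction: $G^{-1}_m=\{1\}$, $G^0_m=\psi^{(m)}(H)$, $G^{n+1}_m=G^n_m\cdot\mathrm{Exp}\,\mathbf k(((G^n_m)^{>G^{n-1}_m}))\subseteq G^{\#(n+1)}$.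 *)

From HB Require Import structures.
From mathcomp Require Import all_boot all_order all_algebra.
From Stdlib Require Import ClassicalEpsilon.
Import Order.TTheory GRing.Theory Num.Theory.
Local Open Scope ring_scope.

Record ogroup := OGroup {
  og_car :> Type;
  og_mul : og_car -> og_car -> og_car;
  og_one : og_car;
  og_inv : og_car -> og_car;
  og_lt : og_car -> og_car -> Prop;
  og_mulA : forall x y z, og_mul x (og_mul y z) = og_mul (og_mul x y) z;
  og_mulC : forall x y, og_mul x y = og_mul y x;
  og_mul1 : forall x, og_mul og_one x = x;
  og_mulV : forall x, og_mul (og_inv x) x = og_one;
  og_lt_irr : forall x, ~ og_lt x x;
  og_lt_trans : forall x y z, og_lt x y -> og_lt y z -> og_lt x z;
  og_lt_total : forall x y, og_lt x y \/ x = y \/ og_lt y x;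
  og_lt_mul : forall x y z, og_lt x y -> og_lt (og_mul x z) (og_mul y z)
}.
Arguments og_mul : clear implicits.
Arguments og_one : clear implicits.
Arguments og_inv : clear implicits.
Arguments og_lt : clear implicits.

Definition anti_wo {A : Type} (lt : A -> A -> Prop) (S : A -> Prop) :=
  forall T : A -> Prop, (forall x, T x -> S x) -> (exists x, T x) ->
    exists x, T x /\ forall y, T y -> ~ lt x y.

(* f : A -> k is a generalized power series with support contained in S. *)
Definition series_on {k : realFieldType} {A : Type} (lt : A -> A -> Prop)
  (S : A -> Prop) (f : A -> k) :=
  (forall x, f x <> 0 -> S x) /\ anti_wo lt (fun x => f x <> 0).

(* f < g in k((A)): the leading coefficient of g - f is positive. *)
Definition series_lt {k : realFieldType} {A : Type} (lt : A -> A -> Prop)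
  (f g : A -> k) :=
  exists x, f x < g x /\ forall y, lt x y -> f y = g y.

Definition sabs {k : realFieldType} {A : Type} (lt : A -> A -> Prop) (f : A -> k)
  : A -> k :=
  if excluded_middle_informative (series_lt lt (fun _ => 0) f) then f
  else (fun x => - f x).

Definition push {k : realFieldType} {A B : Type} (f : A -> B) (a : A -> k) : B -> k :=
  fun y => match excluded_middle_informative (exists x, f x = y) with
           | left H => a (proj1_sig (constructive_indefinite_description _ H))
           | right _ => 0
           end.

Record lv (k : realFieldType) := Lv {
  lR : Type;
  lmem : lR -> Prop;
  lmul : lR -> lR -> lR;
  lone : lR;
  linv : lR -> lR;
  llt : lR -> lR -> Prop
}.
Arguments lR {k}.
Arguments lmem {k}.
Arguments lmul {k}.
Arguments lone {k}.
Arguments linv {k}.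
Arguments llt {k}.

Definition base (k : realFieldType) (G : ogroup) : lv k :=
  @Lv k (og_car G) (fun _ => True) (og_mul G) (og_one G) (og_inv G) (og_lt G).

(* exponential extension: e(alpha) is represented by alpha itself,
   alpha in k((X^{>1})); the group law is addition, the order that of series *)
Definition sharp {k : realFieldType} (X : lv k) : lv k :=
  @Lv k (lR X -> k)
    (fun f : lR X -> k => series_on (llt X) (fun x => lmem X x /\ llt X (lone X) x) f)
    (fun f g x => f x + g x) (fun _ => 0) (fun f x => - f x)
    (series_lt (llt X)).

Fixpoint tower (k : realFieldType) (G : ogroup) (n : nat) : lv k :=
  match n with 0 => base k G | S n' => sharp (tower k G n') end.

(* l^{#n} : G^{#n} -> k((G^{#n})); it is also the identification of G^{#n}
   inside G^{#(n+1)} (e(l^{#n}(x)) = x). *)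
Fixpoint lsh {k : realFieldType} {G : ogroup} (l : G -> G -> k) (n : nat)
  : lR (tower k G n) -> lR (tower k G n.+1) :=
  match n return lR (tower k G n) -> lR (tower k G n.+1) with
  | 0 => l
  | S n' => fun x => push (lsh l n') x
  end.

Definition is_surj_log {k : realFieldType} (log : k -> k) :=
  (forall x y, 0 < x -> 0 < y -> log (x * y) = log x + log y) /\
  (forall x y, 0 < x -> x < y -> log x < log y) /\
  (forall y, exists x, 0 < x /\ log x = y).

Definition prelog_section {k : realFieldType} {G : ogroup} (l : G -> G -> k) :=
  (forall g h, l (og_mul G g h) = (fun x => l g x + l h x)) /\
  (forall g h, og_lt G g h -> series_lt (og_lt G) (l g) (l h)) /\
  (forall g, series_on (og_lt G) (fun x => og_lt G (og_one G) x) (l g)).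

Definition lmorphism {k : realFieldType} {G : ogroup} (l : G -> G -> k)
  (psi : G -> G) :=
  (forall g h, psi (og_mul G g h) = og_mul G (psi g) (psi h)) /\
  (forall g h, og_lt G g h -> og_lt G (psi g) (psi h)) /\
  (forall g, push psi (l g) = l (psi g)).

Definition subgroup {k : realFieldType} (X : lv k) (S : lR X -> Prop) :=
  (forall x, S x -> lmem X x) /\ S (lone X) /\
  (forall x y, S x -> S y -> S (lmul X x y)) /\
  (forall x, S x -> S (linv X x)).

(* growth axiom for H (a nontrivial subgroup of G); Log(h) = l(h) for h in G *)
Definition growth_axiom {k : realFieldType} {G : ogroup} (l : G -> G -> k)
  (H : G -> Prop) :=
  subgroup (base k G) H /\ (exists h, H h /\ h <> og_one G) /\
  forall h, H h -> forall f : G -> k,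
    series_on (og_lt G) (fun x => H x /\ og_lt G (og_one G) x) f ->
    f <> (fun _ => 0) ->
    series_lt (og_lt G) (l h) (sabs (og_lt G) f).

Definition lle {k : realFieldType} (X : lv k) (x y : lR X) := llt X x y \/ x = y.

Definition convex_in {k : realFieldType} (X : lv k) (A C : lR X -> Prop) :=
  forall a1 a2 z, A a1 -> A a2 -> C z -> lle X a1 z -> lle X z a2 -> A z.

Definition antilex_product {k : realFieldType} (X : lv k) (C A B : lR X -> Prop) :=
  subgroup X A /\ subgroup X B /\ subgroup X C /\
  (forall z, C z <-> exists a b, A a /\ B b /\ z = lmul X a b) /\
  (forall z, A z -> B z -> z = lone X) /\
  convex_in X A C.

(* LE construction: returns (G^n_m, the predicate "x > G^{n-1}_m") *)
Fixpoint LE {k : realFieldType} {G : ogroup} (l : G -> G -> k) (psi : G -> G)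
  (H : G -> Prop) (m n : nat)
  : (lR (tower k G n) -> Prop) * (lR (tower k G n) -> Prop) :=
  match n return (lR (tower k G n) -> Prop) * (lR (tower k G n) -> Prop) with
  | 0 => ((fun x : G => exists h, H h /\ x = iter m psi h),
          (fun x : G => og_lt G (og_one G) x))
  | S n' =>
      let p := LE l psi H m n' in
      ((fun z => exists a alpha, p.1 a /\
           series_on (llt (tower k G n')) (fun x => p.1 x /\ p.2 x) alpha /\
           z = lmul (tower k G n'.+1) (lsh l n' a) alpha),
       (fun z => forall y, p.1 y -> llt (tower k G n'.+1) (lsh l n' y) z))
  end.

Definition Gnm {k : realFieldType} {G : ogroup} (l : G -> G -> k) (psi : G -> G)
  (H : G -> Prop) (m n : nat) : lR (tower k G n) -> Prop := (LE l psi H m n).1.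

Definition Gnm_above {k : realFieldType} {G : ogroup} (l : G -> G -> k)
  (psi : G -> G) (H : G -> Prop) (m n : nat) : lR (tower k G n) -> Prop :=
  fun x => (LE l psi H m n).1 x /\ (LE l psi H m n).2 x.

(* Exp k((S)) for S a set of positive elements of G^{#n}: the monomials e(alpha) *)
Definition ExpSet {k : realFieldType} {G : ogroup} (n : nat)
  (S : lR (tower k G n) -> Prop) : lR (tower k G n.+1) -> Prop :=
  fun alpha => series_on (llt (tower k G n)) S alpha.

Definition embed {k : realFieldType} {G : ogroup} (l : G -> G -> k) (n : nat)
  (A : lR (tower k G n) -> Prop) : lR (tower k G n.+1) -> Prop :=
  fun z => exists a, A a /\ z = lsh l n a.

(* The growth axiom is transported from [H] to
      [G^0_m = psi^(m)(H)] because [psi^(m)] commutes with [l].  Growth then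
      bounds the exponents of every [l^{#n}(a)], [a] in [G^{n+1}_m], by
      elements of [G^n_m]; this gives convexity of [G^n_m] in [G^{n+1}_m] and
      triviality of its intersection with [Exp k(((G^n_m)^{>G^{n-1}_m}))], and,
      by induction on [n], the inclusion [Exp k(((G^n_m)^{>1})) <= G^{n+1}_m]. *)

From HB Require Import structures.
From mathcomp Require Import all_boot all_order all_algebra.
From Stdlib Require Import Classical ClassicalEpsilon FunctionalExtensionality.
Import Order.TTheory GRing.Theory Num.Theory.
Local Open Scope ring_scope.

Definition greatest {A : Type} (lt : A -> A -> Prop) (T : A -> Prop) (x : A) :=
  T x /\ forall y, T y -> ~ lt x y.

Definition leading {k : realFieldType} {A : Type} (lt : A -> A -> Prop)
  (f : A -> k) (x0 : A) :=
  f x0 <> 0 /\ forall y, lt x0 y -> f y = 0.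

Lemma addr_neq0 {k : realFieldType} (a b : k) : a + b <> 0 -> a <> 0 \/ b <> 0.
Proof.
by move=> ab; apply: NNPP => /not_or_and [/NNPP a0 /NNPP b0]; apply: ab; rewrite a0 b0 addr0.
Qed.

Lemma lt_neq {k : realFieldType} (a b : k) : a < b -> a <> b.
Proof. by move=> ab ab'; rewrite ab' ltxx in ab. Qed.
Arguments lt_neq {k a b}.

Lemma neq_neq0 {k : realFieldType} (a b : k) : a <> b -> a <> 0 \/ b <> 0.
Proof. by move=> ab; apply: NNPP => /not_or_and [/NNPP a0 /NNPP b0]; apply: ab; rewrite a0 b0. Qed.

Definition restrict {k : realFieldType} {A : Type} (Q : A -> Prop) (f : A -> k) : A -> k :=
  fun x => if excluded_middle_informative (Q x) then f x else 0.

Lemma restrict_split {k : realFieldType} {A : Type} (Q : A -> Prop) (f : A -> k) :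
  f = (fun x => restrict (fun y => ~ Q y) f x + restrict Q f x).
Proof.
apply: functional_extensionality => x; rewrite /restrict.
by do 2 case: excluded_middle_informative => //=; rewrite ?addr0 ?add0r.
Qed.

Lemma restrict_supp {k : realFieldType} {A : Type} {Q : A -> Prop} {f : A -> k} {x} :
  restrict Q f x <> 0 -> Q x /\ f x <> 0.
Proof. by rewrite /restrict; case: excluded_middle_informative. Qed.

Section Series.
Context {k : realFieldType} {A : Type} {lt : A -> A -> Prop} {mem : A -> Prop}.
Hypothesis lt_trans_mem :
  forall {x y z}, mem x -> mem y -> mem z -> lt x y -> lt y z -> lt x z.
Hypothesis lt_total_mem : forall {x y}, mem x -> mem y -> lt x y \/ x = y \/ lt y x.

Lemma awo_sub {S S' : A -> Prop} :
  anti_wo lt S -> (forall x, S' x -> S x) -> anti_wo lt S'.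
Proof. by move=> WS S'S T TS'; apply: WS => x /TS' /S'S. Qed.

(* A union of two anti-well-ordered subsets of [mem] is anti-well-ordered:
   the larger of the two partial maxima is a maximum. *)
Lemma awo_union {S1 S2 : A -> Prop} :
  (forall x, S1 x -> mem x) -> (forall x, S2 x -> mem x) ->
  anti_wo lt S1 -> anti_wo lt S2 -> anti_wo lt (fun x => S1 x \/ S2 x).
Proof.
move=> M1 M2 W1 W2 T TS [x0 Tx0].
pose part U y := T y /\ U y.
have larger : forall U1 U2 m1 m2, (forall y, T y -> U1 y \/ U2 y) ->
    (forall y, U1 y -> mem y) -> (forall y, U2 y -> mem y) ->
    greatest lt (part U1) m1 -> greatest lt (part U2) m2 ->
    lt m1 m2 \/ m1 = m2 -> greatest lt T m2.
  move=> U1 U2 m1 m2 TU MU1 MU2 [[_ U1m1] max1] [[Tm2 U2m2] max2] le12.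
  split=> // y Ty m2y; case: (TU y Ty) => Uy; last exact: (max2 y (conj Ty Uy)).
  apply: (max1 y (conj Ty Uy)); case: le12 => [m12|-> //].
  exact: (lt_trans_mem (MU1 _ U1m1) (MU2 _ U2m2) (MU1 _ Uy) m12).
have [[y1 T1y1]|N1] := classic (exists y, part S1 y); last first.
  apply: W2 (ex_intro _ x0 Tx0) => y Ty.
  by case: (TS y Ty) => // S1y; case: N1; exists y.
have [[y2 T2y2]|N2] := classic (exists y, part S2 y); last first.
  apply: W1 (ex_intro _ x0 Tx0) => y Ty.
  by case: (TS y Ty) => // S2y; case: N2; exists y.
have [m1 max1] := W1 (part S1) (fun y => @proj2 _ _) (ex_intro _ y1 T1y1).
have [m2 max2] := W2 (part S2) (fun y => @proj2 _ _) (ex_intro _ y2 T2y2).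
have TS' : forall y, T y -> S2 y \/ S1 y by move=> y /TS [] ?; [right|left].
case: (lt_total_mem (M1 _ (proj2 (proj1 max1))) (M2 _ (proj2 (proj1 max2))))
  => [m12|[m12|m21]].
- by exists m2; apply: (larger S1 S2 m1 m2); auto.
- by exists m2; apply: (larger S1 S2 m1 m2); auto.
- by exists m1; apply: (larger S2 S1 m2 m1); auto.
Qed.

Lemma series_on_weaken {S S' : A -> Prop} {f : A -> k} :
  (forall x, S x -> S' x) -> series_on lt S f -> series_on lt S' f.
Proof. by move=> SS' [fS fW]; split=> // x /fS /SS'. Qed.

Lemma series_on_zero {S : A -> Prop} : series_on lt S (fun _ => 0 : k).
Proof. by split=> [x //|T TS [x Tx]]; case: (TS x Tx). Qed.

Lemma series_on_restrict {S : A -> Prop} (Q : A -> Prop) {f : A -> k} :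
  series_on lt S f -> series_on lt (fun x => S x /\ Q x) (restrict Q f).
Proof.
rewrite /restrict => -[fS fW]; split.
  by move=> x; case: excluded_middle_informative => // Qx /fS.
by refine (awo_sub fW _) => x; case: excluded_middle_informative.
Qed.

Lemma series_on_opp {S : A -> Prop} {f : A -> k} :
  series_on lt S f -> series_on lt S (fun x => - f x).
Proof.
move=> [fS fW]; split; first by move=> x fx; apply: fS => f0; apply: fx; rewrite f0 oppr0.
by refine (awo_sub fW _) => x fx f0; apply: fx; rewrite f0 oppr0.
Qed.

Lemma series_on_add {S : A -> Prop} {f g : A -> k} : (forall x, S x -> mem x) ->
  series_on lt S f -> series_on lt S g -> series_on lt S (fun x => f x + g x).
Proof.
move=> SM [fS fW] [gS gW]; split; first by move=> x /addr_neq0 [/fS|/gS].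
have W := awo_union (fun x fx => SM _ (fS x fx)) (fun x gx => SM _ (gS x gx)) fW gW.
by refine (awo_sub W _) => x /addr_neq0.
Qed.

Lemma series_diff_mem {S : A -> Prop} {f g : A -> k} {x} : (forall x, S x -> mem x) ->
  series_on lt S f -> series_on lt S g -> f x <> g x -> mem x.
Proof. by move=> SM [fS _] [gS _] /neq_neq0 [/fS/SM|/gS/SM]. Qed.

Lemma slt_irr (f : A -> k) : ~ series_lt lt f f.
Proof. by move=> [x [ffx _]]; rewrite ltxx in ffx. Qed.

Lemma slt_addr (f g h : A -> k) : series_lt lt f g ->
  series_lt lt (fun x => f x + h x) (fun x => g x + h x).
Proof. by move=> [x [fgx fg]]; exists x; split; [rewrite ltrD2r | move=> y /fg ->]. Qed.

Lemma slt_subr {f g h : A -> k} : series_lt lt (fun x => f x - g x) h ->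
  series_lt lt f (fun x => h x + g x).
Proof.
move=> /(slt_addr _ _ g); congr series_lt.
by apply: functional_extensionality => x; rewrite subrK.
Qed.

Section SeriesOrder.
Context {S : A -> Prop}.
Hypothesis SM : forall x, S x -> mem x.

Lemma slt_asym {f g : A -> k} : series_on lt S f -> series_on lt S g ->
  series_lt lt f g -> series_lt lt g f -> False.
Proof.
move=> Sf Sg [x [fgx fg]] [y [gfy gf]].
have mx := series_diff_mem SM Sf Sg (lt_neq fgx).
have my := series_diff_mem SM Sf Sg (nesym (lt_neq gfy)).
case: (lt_total_mem mx my) => [xy|[exy|yx]].
- by move: gfy; rewrite (fg y xy) ltxx.
- by move: gfy; rewrite -exy => /(lt_trans fgx); rewrite ltxx.
- by move: fgx; rewrite (gf x yx) ltxx.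
Qed.

Lemma slt_trans {f g h : A -> k} : series_on lt S f -> series_on lt S g ->
  series_on lt S h -> series_lt lt f g -> series_lt lt g h -> series_lt lt f h.
Proof.
move=> Sf Sg Sh [x [fgx fg]] [y [ghy gh]].
have mx := series_diff_mem SM Sf Sg (lt_neq fgx).
have my := series_diff_mem SM Sg Sh (lt_neq ghy).
case: (lt_total_mem mx my) => [xy|[exy|yx]].
- exists y; split; first by rewrite (fg y xy).
  move=> z yz; rewrite -(gh z yz); apply: NNPP => fgz; apply/fgz/fg.
  exact: lt_trans_mem mx my (series_diff_mem SM Sf Sg fgz) xy yz.
- rewrite -exy in ghy gh; exists x; split; first exact: lt_trans fgx ghy.
  by move=> z xz; rewrite (fg z xz) (gh z xz).
- exists x; split; first by rewrite -(gh x yx).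
  move=> z xz; rewrite (fg z xz); apply: NNPP => ghz; apply/ghz/gh.
  exact: lt_trans_mem my mx (series_diff_mem SM Sg Sh ghz) yx xz.
Qed.

(* Two distinct series are compared at the greatest point where they differ. *)
Lemma slt_total {f g : A -> k} : series_on lt S f -> series_on lt S g ->
  series_lt lt f g \/ f = g \/ series_lt lt g f.
Proof.
move=> [fS fW] [gS gW].
have [[x0 fgx0]|fg] := classic (exists x, f x <> g x); last first.
  right; left; apply: functional_extensionality => x.
  by apply: NNPP => fgx; apply: fg; exists x.
have W := awo_union (fun x fx => SM _ (fS x fx)) (fun x gx => SM _ (gS x gx)) fW gW.
have [x [fgx xmax]] := W (fun x => f x <> g x) (fun x => @neq_neq0 k _ _)
  (ex_intro _ x0 fgx0).
have above : forall y, lt x y -> f y = g y.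
  by move=> y xy; apply: NNPP => fgy; apply: xmax fgy xy.
have /lt_total/orP[fltg|gltf] : f x != g x by apply/eqP.
- by left; exists x.
- by right; right; exists x; split=> // y /above.
Qed.

End SeriesOrder.

Lemma leading_ex {S : A -> Prop} {f : A -> k} : series_on lt S f ->
  f <> (fun _ => 0) -> exists x0, leading lt f x0.
Proof.
move=> [_ fW] f0.
have [x fx] : exists x, f x <> 0.
  apply: NNPP => fx; apply: f0; apply: functional_extensionality => x.
  by apply: NNPP => ?; apply: fx; exists x.
have [x0 [fx0 x0max]] := fW (fun x => f x <> 0) (fun x fx => fx) (ex_intro _ x fx).
by exists x0; split=> // y x0y; apply: NNPP => fy; apply: x0max fy x0y.
Qed.

Lemma sabs_pos {f : A -> k} : series_lt lt (fun _ => 0) f -> sabs lt f = f.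
Proof. by rewrite /sabs; case: excluded_middle_informative. Qed.

Lemma sabs_npos {f : A -> k} :
  ~ series_lt lt (fun _ => 0) f -> sabs lt f = (fun x => - f x).
Proof. by rewrite /sabs; case: excluded_middle_informative. Qed.

End Series.

Section Relabel.
Context {k : realFieldType} {A B : Type} {ltA : A -> A -> Prop} {ltB : B -> B -> Prop}.
Variable e : A -> B.
Hypothesis e_inj : forall x y, e x = e y -> x = y.

Lemma push_img (a : A -> k) x : push e a (e x) = a x.
Proof.
rewrite /push; case: excluded_middle_informative => [ex|]; last by case; exists x.
by case: (constructive_indefinite_description _ ex) => y /= /e_inj ->.
Qed.

Lemma push_out (a : A -> k) y : ~ (exists x, e x = y) -> push e a y = 0.
Proof. by rewrite /push; case: excluded_middle_informative. Qed.

Lemma push_cases (a : A -> k) y :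
  (exists x, y = e x /\ push e a y = a x) \/ push e a y = 0.
Proof.
have [[x <-]|N] := classic (exists x, e x = y); last by right; apply: push_out.
by left; exists x; rewrite push_img.
Qed.

Lemma push_supp {a : A -> k} {y} : push e a y <> 0 -> exists x, y = e x /\ a x <> 0.
Proof. by case: (push_cases a y) => [[x [-> ->]]|->] ay; [exists x|]. Qed.

Lemma push_inj (a b : A -> k) : push e a = push e b -> a = b.
Proof.
by move=> ab; apply: functional_extensionality => x; rewrite -!(push_img _ x) ab.
Qed.

Lemma push_add (a b : A -> k) :
  push e (fun x => a x + b x) = (fun y => push e a y + push e b y).
Proof.
apply: functional_extensionality => y; rewrite /push.
by case: excluded_middle_informative; rewrite ?addr0.
Qed.

Lemma push_opp (a : A -> k) : push e (fun x => - a x) = (fun y => - push e a y).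
Proof.
apply: functional_extensionality => y; rewrite /push.
by case: excluded_middle_informative; rewrite ?oppr0.
Qed.

Lemma push_zero : push e (fun _ => 0 : k) = (fun _ => 0).
Proof.
by apply: functional_extensionality => y; rewrite /push; case: excluded_middle_informative.
Qed.

Lemma push_pullback (b : B -> k) :
  (forall y, b y <> 0 -> exists x, y = e x) -> push e (fun x => b (e x)) = b.
Proof.
move=> bim; apply: functional_extensionality => y.
have [[x ->]|N] := classic (exists x, y = e x); first by rewrite push_img.
rewrite push_out => [|[x /esym ey]]; last by apply: N; exists x.
by apply: NNPP => /nesym /bim.
Qed.

Lemma push_lt {a b : A -> k} :
  (forall x y, a x <> b x -> a y <> b y -> ltB (e x) (e y) -> ltA x y) ->
  series_lt ltA a b -> series_lt ltB (push e a) (push e b).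
Proof.
move=> refl [w [abw ab]]; exists (e w); split; first by rewrite !push_img.
move=> z wz; have [[x exz]|N] := classic (exists x, e x = z); last by rewrite !push_out.
rewrite -exz !push_img; apply: NNPP => abx; apply/abx/ab.
by apply: refl (lt_neq abw) abx _; rewrite exz.
Qed.

Lemma push_lt_reflect {a b : A -> k} : (forall x y, ltA x y -> ltB (e x) (e y)) ->
  series_lt ltB (push e a) (push e b) -> series_lt ltA a b.
Proof.
move=> mono [y [aby ab]].
have [[w ewy]|N] := classic (exists x, e x = y); last by move: aby; rewrite !push_out ?ltxx.
rewrite -ewy !push_img in aby; exists w; split=> // z wz.
by rewrite -(push_img a z) -(push_img b z); apply: ab; rewrite -ewy; apply: mono.
Qed.

Lemma push_sabs (a : A -> k) : (forall x y, ltA x y <-> ltB (e x) (e y)) ->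
  push e (sabs ltA a) = sabs ltB (push e a).
Proof.
move=> mono; have push0 : push e (fun _ => 0 : k) = (fun _ => 0) := push_zero.
have [pos|npos] := classic (series_lt ltA (fun _ => 0) a).
  rewrite !sabs_pos // -push0.
  exact: (push_lt (fun x y _ _ => proj2 (mono x y)) pos).
rewrite !sabs_npos ?push_opp // -push0 => /(push_lt_reflect (fun x y => proj1 (mono x y))).
exact: npos.
Qed.

Lemma series_on_push {S : A -> Prop} {S' : B -> Prop} {a : A -> k} :
  (forall x, S x -> S' (e x)) ->
  (forall x y, S x -> S y -> ltB (e x) (e y) -> ltA x y) ->
  series_on ltA S a -> series_on ltB S' (push e a).
Proof.
move=> SS' refl [aS aW]; split.
  by move=> y /push_supp [x [-> ax]]; apply/SS'/aS.
move=> T Tsupp [y0 Ty0].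
have [x0 [ey0 ax0]] := push_supp (Tsupp _ Ty0).
have [x1 [[ax1 Tx1] x1max]] :=
  aW (fun x => a x <> 0 /\ T (e x)) (fun x => @proj1 _ _)
     (ex_intro _ x0 (conj ax0 (eq_ind _ T Ty0 _ ey0))).
exists (e x1); split=> // y Ty x1y.
have [x [eyx ax]] := push_supp (Tsupp _ Ty); rewrite eyx in Ty x1y.
by apply: (x1max x (conj ax Ty)); apply: refl x1y; apply: aS.
Qed.

Lemma series_on_pullback {S : B -> Prop} {b : B -> k} :
  (forall x y, b (e x) <> 0 -> b (e y) <> 0 -> ltA x y -> ltB (e x) (e y)) ->
  series_on ltB S b -> series_on ltA (fun x => S (e x)) (fun x => b (e x)).
Proof.
move=> mono [bS bW]; split=> [x /bS //|T Tsupp [x0 Tx0]].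
have Tsupp' : forall y, (exists x, T x /\ y = e x) -> b y <> 0.
  by move=> _ [x [Tx ->]]; apply: Tsupp.
have [y1 [[x1 [Tx1 ->]] y1max]] :=
  bW _ Tsupp' (ex_intro _ (e x0) (ex_intro _ x0 (conj Tx0 erefl))).
exists x1; split=> // x Tx x1x; apply: (y1max (e x)); first by exists x.
by apply: mono x1x; apply: Tsupp.
Qed.

End Relabel.

Lemma push_comp {k : realFieldType} {A B C : Type} (f : A -> B) (g : B -> C)
  (a : A -> k) : (forall x y, f x = f y -> x = y) -> (forall x y, g x = g y -> x = y) ->
  push (fun x => g (f x)) a = push g (push f a).
Proof.
move=> f_inj g_inj; have gf_inj : forall x y, g (f x) = g (f y) -> x = y.
  by move=> x y /g_inj /f_inj.
apply: functional_extensionality => z.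
have [[x <-]|N] := classic (exists x, g (f x) = z); first by rewrite !push_img.
rewrite push_out //; have [[y gyz]|N'] := classic (exists y, g y = z); last first.
  by rewrite push_out.
by rewrite -gyz push_img // push_out // => -[x fxy]; apply: N; exists x; rewrite fxy.
Qed.

Record level_ok {k : realFieldType} (X : lv k) : Prop := LevelOk {
  lv_irr : forall x, ~ llt X x x;
  lv_trans : forall x y z, lmem X x -> lmem X y -> lmem X z ->
    llt X x y -> llt X y z -> llt X x z;
  lv_total : forall x y, lmem X x -> lmem X y -> llt X x y \/ x = y \/ llt X y x;
  lv_one : lmem X (lone X)
}.
Arguments lv_irr {k X}.
Arguments lv_trans {k X} _ {x y z}.
Arguments lv_total {k X} _ {x y}.
Arguments lv_one {k X}.

Definition Pos {k : realFieldType} (X : lv k) (x : lR X) := lmem X x /\ llt X (lone X) x.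

Lemma Pos_mem {k : realFieldType} {X : lv k} x : Pos X x -> lmem X x.
Proof. by case. Qed.

Lemma lle_lt_false {k : realFieldType} {X : lv k} {u v : lR X} : level_ok X ->
  lmem X u -> lmem X v -> llt X u v -> lle X v u -> False.
Proof.
move=> OX mu mv uv [vu|vu]; last by rewrite vu in uv; exact: lv_irr OX _ uv.
by apply: (lv_irr OX u); apply: (lv_trans OX mu mv mu uv vu).
Qed.

Section Sharp.
Context {k : realFieldType} {X : lv k}.
Hypothesis OX : level_ok X.

Lemma expset_subgroup {S : lR X -> Prop} : (forall x, S x -> Pos X x) ->
  subgroup (sharp X) (series_on (llt X) S).
Proof.
move=> SP; have SM x : S x -> lmem X x by move/SP/Pos_mem.
split; first by move=> a; apply: series_on_weaken.
split; first exact: series_on_zero.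
split; first by move=> a b; apply: (series_on_add (@lv_trans _ _ OX) (@lv_total _ _ OX)).
by move=> a; apply: series_on_opp.
Qed.

Lemma sharp_ok : level_ok (sharp X).
Proof.
split.
- exact: slt_irr.
- move=> f g h; exact: (slt_trans (@lv_trans _ _ OX) (@lv_total _ _ OX) Pos_mem).
- move=> f g; exact: (slt_total (@lv_trans _ _ OX) (@lv_total _ _ OX) Pos_mem).
- exact: series_on_zero.
Qed.

End Sharp.

Record level_emb {k : realFieldType} (X Y : lv k) (e : lR X -> lR Y) : Prop := LevelEmb {
  emb_inj : forall x y, e x = e y -> x = y;
  emb_mem : forall x, lmem X x -> lmem Y (e x);
  emb_lt : forall x y, lmem X x -> lmem X y -> llt X x y -> llt Y (e x) (e y);
  emb_mul : forall x y, e (lmul X x y) = lmul Y (e x) (e y);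
  emb_inv : forall x, e (linv X x) = linv Y (e x);
  emb_one : e (lone X) = lone Y
}.
Arguments emb_inj {k X Y e}.
Arguments emb_mem {k X Y e} _ {x}.
Arguments emb_lt {k X Y e} _ {x y}.
Arguments emb_mul {k X Y e}.
Arguments emb_inv {k X Y e}.
Arguments emb_one {k X Y e}.

Section Embeddings.
Context {k : realFieldType} {X Y : lv k} {e : lR X -> lR Y}.
Hypotheses (OX : level_ok X) (OY : level_ok Y) (E : level_emb X Y e).

Lemma emb_reflect x y : lmem X x -> lmem X y -> llt Y (e x) (e y) -> llt X x y.
Proof.
move=> mx my exy; case: (lv_total OX mx my) => [//|[xy|yx]].
  by rewrite xy in exy; case: (lv_irr OY _ exy).
by case: (lle_lt_false OY (emb_mem E mx) (emb_mem E my) exy); left; apply: emb_lt.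
Qed.

Lemma emb_Pos x : Pos X x -> Pos Y (e x).
Proof.
move=> [mx x1]; split; first exact: (emb_mem E).
by rewrite -(emb_one E); apply: (emb_lt E) (lv_one OX) mx x1.
Qed.

Lemma sharp_emb : level_emb (sharp X) (sharp Y) (push e).
Proof.
split.
- exact: push_inj (emb_inj E).
- move=> a; apply: (series_on_push e (emb_inj E) emb_Pos) => x y /Pos_mem mx /Pos_mem my.
  exact: emb_reflect.
- move=> a b ma mb; apply: (push_lt e (emb_inj E)) => x y abx aby; apply: emb_reflect.
  + exact: series_diff_mem Pos_mem ma mb abx.
  + exact: series_diff_mem Pos_mem ma mb aby.
- exact: push_add.
- exact: push_opp.
- exact: push_zero.
Qed.

Lemma embed_subgroup (A : lR X -> Prop) :
  subgroup X A -> subgroup Y (fun z => exists a, A a /\ z = e a).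
Proof.
move=> [AM [A1 [AD AN]]].
split; first by move=> _ [a [Aa ->]]; apply/(emb_mem E)/AM.
split; first by exists (lone X); rewrite (emb_one E).
split; first by move=> _ _ [a [Aa ->]] [b [Ab ->]]; exists (lmul X a b); rewrite (emb_mul E); auto.
by move=> _ [a [Aa ->]]; exists (linv X a); rewrite (emb_inv E); auto.
Qed.

End Embeddings.

(* The products [e(a) * alpha], with [a] in a subgroup [A] of [X] and [alpha]
   in [Exp k((S))], form a subgroup of [X#]; this is the shape of [G^{n+1}_m]. *)
Lemma product_subgroup {k : realFieldType} {X : lv k} (A S : lR X -> Prop)
  (e : lR X -> lR (sharp X)) : level_ok X -> level_emb X (sharp X) e ->
  subgroup X A -> (forall x, S x -> Pos X x) ->
  subgroup (sharp X) (fun z => exists a alpha, A a /\ series_on (llt X) S alpha /\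
                                 z = lmul (sharp X) (e a) alpha).
Proof.
move=> OX E [AM [A1 [AD AN]]] SP.
have [BM [B1 [BD BN]]] := expset_subgroup OX SP.
have [_ [_ [sharpD _]]] := expset_subgroup OX (fun x (Px : Pos X x) => Px).
split.
  move=> _ [a [al [Aa [Sal ->]]]]; apply: sharpD; [exact/(emb_mem E)/AM | exact: BM].
split.
  exists (lone X), (lone (sharp X)); do 2 split=> //.
  by rewrite (emb_one E); apply: functional_extensionality => x /=; rewrite addr0.
split.
  move=> _ _ [a [al [Aa [Sal ->]]]] [b [be [Ab [Sbe ->]]]].
  exists (lmul X a b), (lmul (sharp X) al be); split; first exact: AD.
  split; first exact: BD.
  by rewrite (emb_mul E); apply: functional_extensionality => t /=; rewrite addrACA.
move=> _ [a [al [Aa [Sal ->]]]].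
exists (linv X a), (linv (sharp X) al); split; first exact: AN.
split; first exact: BN.
by rewrite (emb_inv E); apply: functional_extensionality => t /=; rewrite opprD.
Qed.

Section Tower.
Context {k : realFieldType} {G : ogroup} {l : G -> G -> k}.
Hypothesis P : prelog_section l.

Lemma base_ok : level_ok (base k G).
Proof.
split; first exact: og_lt_irr.
- by move=> x y z _ _ _; apply: og_lt_trans.
- by move=> x y _ _; apply: og_lt_total.
- by [].
Qed.

Lemma l_one : l (og_one G) = (fun _ => 0).
Proof.
apply: functional_extensionality => x; apply: (@addrI _ (l (og_one G) x)).
by have := f_equal (fun f => f x) (proj1 P (og_one G) (og_one G)); rewrite og_mul1 addr0.
Qed.

Lemma l_inv g : l (og_inv G g) = (fun x => - l g x).
Proof.
apply: functional_extensionality => x; apply/eqP; rewrite -addr_eq0.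
by have := f_equal (fun f => f x) (proj1 P (og_inv G g) g); rewrite og_mulV l_one => <-.
Qed.

Lemma base_emb : level_emb (base k G) (sharp (base k G)) l.
Proof.
have [lD [l_lt lS]] := P.
split.
- move=> x y lxy; case: (og_lt_total G x y) => [xy|[//|yx]].
  + by have := l_lt _ _ xy; rewrite lxy => /slt_irr.
  + by have := l_lt _ _ yx; rewrite lxy => /slt_irr.
- by move=> x _; apply: series_on_weaken (lS x).
- by move=> x y _ _; apply: l_lt.
- exact: lD.
- exact: l_inv.
- exact: l_one.
Qed.

Lemma tower_ok_emb n :
  level_ok (tower k G n) /\ level_emb (tower k G n) (tower k G n.+1) (lsh l n).
Proof.
elim: n => [|n [On En]]; first by split; [exact: base_ok | exact: base_emb].
by split; [exact: sharp_ok | exact: (sharp_emb On (sharp_ok On) En)].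
Qed.

Lemma tower_ok n : level_ok (tower k G n). Proof. exact: (tower_ok_emb n).1. Qed.

Lemma tower_emb n : level_emb (tower k G n) (tower k G n.+1) (lsh l n).
Proof. exact: (tower_ok_emb n).2. Qed.

Lemma l_div g g' : l (og_mul G g (og_inv G g')) = (fun x => l g x - l g' x).
Proof. by rewrite (proj1 P) l_inv. Qed.

Lemma lsh_inj n x y : lsh l n x = lsh l n y -> x = y.
Proof. exact: (emb_inj (tower_emb n) x y). Qed.

Lemma lsh_mem n x : lmem (tower k G n) x -> lmem (tower k G n.+1) (lsh l n x).
Proof. exact: (emb_mem (tower_emb n)). Qed.

Lemma lsh_one n : lsh l n (lone (tower k G n)) = lone (tower k G n.+1).
Proof. exact: (emb_one (tower_emb n)). Qed.

Lemma lsh_lt_iff n x y : lmem (tower k G n) x -> lmem (tower k G n) y ->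
  llt (tower k G n) x y <-> llt (tower k G n.+1) (lsh l n x) (lsh l n y).
Proof.
move=> mx my; split; first exact: (emb_lt (tower_emb n) mx my).
exact: (emb_reflect (tower_ok n) (tower_ok n.+1) (tower_emb n) _ _ mx my).
Qed.

End Tower.

Section OrderedGroup.
Context {G : ogroup}.
Local Notation "x * y" := (og_mul G x y).
Local Notation one := (og_one G).
Local Notation inv := (og_inv G).
Local Notation lt := (og_lt G).

Lemma og_mulg1 x : x * one = x. Proof. by rewrite og_mulC og_mul1. Qed.
Lemma og_mulgV x : x * inv x = one. Proof. by rewrite og_mulC og_mulV. Qed.

Lemma og_mulIr x y z : x * z = y * z -> x = y.
Proof.
by move=> e; rewrite -(og_mulg1 x) -(og_mulgV z) og_mulA e -og_mulA og_mulgV og_mulg1.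
Qed.

Lemma og_inv_uniq x y : x * y = one -> x = inv y.
Proof. by rewrite -(og_mulV G y); apply: og_mulIr. Qed.

Lemma og_asym {x y : G} : lt x y -> lt y x -> False.
Proof. by move=> xy yx; apply: (og_lt_irr G x (og_lt_trans G _ _ _ xy yx)). Qed.

Lemma og_inv_gt1 x : lt x one -> lt one (inv x).
Proof. by move=> /(og_lt_mul G _ _ (inv x)); rewrite og_mulgV og_mul1. Qed.

Section Endomorphism.
Variable phi : G -> G.
Hypothesis phi_mul : forall x y, phi (x * y) = phi x * phi y.
Hypothesis phi_lt : forall x y, lt x y -> lt (phi x) (phi y).

Lemma phi_inj x y : phi x = phi y -> x = y.
Proof.
move=> exy; case: (og_lt_total G x y) => [xy|[//|yx]].
- by have := phi_lt _ _ xy; rewrite exy => /og_lt_irr.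
- by have := phi_lt _ _ yx; rewrite exy => /og_lt_irr.
Qed.

Lemma phi_one : phi one = one.
Proof. by apply: (@og_mulIr _ _ (phi one)); rewrite -phi_mul !og_mul1. Qed.

Lemma phi_inv x : phi (inv x) = inv (phi x).
Proof. by apply: og_inv_uniq; rewrite -phi_mul og_mulV phi_one. Qed.

Lemma phi_lt_iff x y : lt x y <-> lt (phi x) (phi y).
Proof.
split; first exact: phi_lt.
move=> pxy; case: (og_lt_total G x y) => [//|[xy|yx]].
- by rewrite xy in pxy; case: (og_lt_irr G _ pxy).
- by case: (og_asym (phi_lt _ _ yx) pxy).
Qed.

End Endomorphism.
End OrderedGroup.

Lemma lmorphism_iter {k : realFieldType} {G : ogroup} (l : G -> G -> k) (psi : G -> G)
  m : lmorphism l psi -> lmorphism l (iter m psi).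
Proof.
move=> [pmul [plt pl]]; elim: m => [|m [imul [ilt il]]].
  split=> //; split=> // g.
  exact: (push_pullback (fun x => x) (fun x y xy => xy) (l g) (fun y _ => ex_intro _ y erefl)).
split; first by move=> g h /=; rewrite imul pmul.
split; first by move=> g h /ilt /plt.
move=> g; change (iter m.+1 psi) with (fun x => psi (iter m psi x)).
rewrite (push_comp (iter m psi) psi) ?il ?pl //.
- exact: phi_inj _ ilt.
- exact: phi_inj _ plt.
Qed.

Lemma growth_image {k : realFieldType} {G : ogroup} (l : G -> G -> k) (phi : G -> G)
  (H : G -> Prop) : lmorphism l phi -> growth_axiom l H ->
  growth_axiom l (fun x => exists h, H h /\ x = phi h).
Proof.
move=> [pmul [plt pl]] [[_ [H1 [HD HN]]] [[h0 [Hh0 h0n]] Hgrowth]].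
have pinj := phi_inj phi plt.
have p1 := phi_one phi pmul.
split.
  split=> //; split; first by exists (og_one G); rewrite p1.
  split.
    by move=> _ _ [a [Ha ->]] [b [Hb ->]]; exists (og_mul G a b); rewrite pmul; split; [apply: HD|].
  by move=> _ [a [Ha ->]]; exists (og_inv G a); rewrite (phi_inv phi pmul); split; [apply: HN|].
split; first by exists (phi h0); split; [exists h0 | rewrite -p1 => /pinj].
move=> _ [h [Hh ->]] f Sf f0.
pose f' x := f (phi x).
have f_img : forall y, f y <> 0 -> exists x, y = phi x.
  by move=> y /(proj1 Sf) [[x [_ ->]] _]; exists x.
have ef : push phi f' = f := push_pullback phi pinj f f_img.
have Sf' : series_on (og_lt G) (fun x => H x /\ og_lt G (og_one G) x) f'.
  apply: series_on_weaken (series_on_pullback phi (fun x y _ _ => plt x y) Sf).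
  move=> x [[x' [Hx' /pinj ->]] lt1]; split=> //.
  by apply/(phi_lt_iff phi plt); rewrite p1.
have f'0 : f' <> (fun _ => 0) by move=> f'0; apply: f0; rewrite -ef f'0 push_zero.
have := push_lt phi pinj (fun x y _ _ => proj2 (phi_lt_iff phi plt x y))
  (Hgrowth h Hh f' Sf' f'0).
by rewrite pl (push_sabs (ltB := og_lt G) phi pinj) ?ef //; apply: phi_lt_iff.
Qed.

Definition monomial {k : realFieldType} {A : Type} (h : A) : A -> k :=
  fun y => if excluded_middle_informative (y = h) then 1 else 0.

Section SeriesOverG.
Context {k : realFieldType} {G : ogroup}.
Local Notation lt := (og_lt G).

Lemma og_slt_asym {S : G -> Prop} {f g : G -> k} : series_on lt S f -> series_on lt S g ->
  series_lt lt f g -> series_lt lt g f -> False.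
Proof.
exact: (slt_asym (mem := fun _ => True) (fun x y _ _ => og_lt_total G x y) (fun _ _ => I)).
Qed.

Lemma monomial_out (h y : G) : y <> h -> monomial h y = 0 :> k.
Proof. by rewrite /monomial; case: excluded_middle_informative. Qed.

Lemma monomial_series (S : G -> Prop) (h : G) : S h -> series_on lt S (monomial h : G -> k).
Proof.
move=> Sh; have supp y : monomial h y <> 0 :> k -> y = h.
  by rewrite /monomial; case: excluded_middle_informative.
split; first by move=> y /supp ->.
move=> T Tsupp [y Ty]; exists y; split=> // z Tz.
by rewrite (supp z (Tsupp z Tz)) -(supp y (Tsupp y Ty)); apply: og_lt_irr.
Qed.

Lemma monomial_pos (h : G) : series_lt lt (fun _ => 0) (monomial h : G -> k).
Proof.
exists h; split; first by rewrite /monomial; case: excluded_middle_informative.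
by move=> y hy; rewrite monomial_out // => yh; rewrite yh in hy; apply: og_lt_irr hy.
Qed.

Lemma monomial_lt_leading (f : G -> k) (h x1 : G) :
  leading lt f x1 -> 0 < f x1 -> lt h x1 -> series_lt lt (monomial h) f.
Proof.
move=> [_ above] fx1 hx1; exists x1; split.
  by rewrite monomial_out // => x1h; rewrite x1h in hx1; apply: og_lt_irr hx1.
move=> y x1y; rewrite above // monomial_out // => yh.
by rewrite yh in x1y; apply: og_asym hx1 x1y.
Qed.

End SeriesOverG.

Section LEConstruction.
Context {k : realFieldType} {G : ogroup} {l : G -> G -> k} {psi : G -> G}
  {H : G -> Prop} {m : nat}.
Hypothesis P : prelog_section l.
Hypothesis GA0 : growth_axiom l (Gnm l psi H m 0).

Local Notation T n := (tower k G n).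
Local Notation A n := (Gnm l psi H m n).
Local Notation Above n := (Gnm_above l psi H m n).

Lemma LE_subgroup n : subgroup (T n) (A n) /\ (forall x, Above n x -> Pos (T n) x).
Proof.
elim: n => [|n [An Abn]]; first by split; [exact: (proj1 GA0) | move=> x [_ x1]].
have An1 := product_subgroup (A n) (Above n) (lsh l n) (tower_ok P n) (tower_emb P n) An Abn.
split; first exact: An1.
move=> x [Ax above]; split; first exact: (proj1 An1 x Ax).
by rewrite -(emb_one (tower_emb P n)); apply/above/(proj1 (proj2 An)).
Qed.

Lemma LE_mem {n x} : A n x -> lmem (T n) x.
Proof. exact: (proj1 (proj1 (LE_subgroup n))). Qed.

Lemma LE_one n : A n (lone (T n)).
Proof. exact: (proj1 (proj2 (proj1 (LE_subgroup n)))). Qed.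

Lemma LE_embed n a : A n a -> A n.+1 (lsh l n a).
Proof.
move=> Aa; exists a, (lone (T n.+1)); split=> //; split; first exact: series_on_zero.
by apply: functional_extensionality => x /=; rewrite addr0.
Qed.

Lemma growth0 {f : G -> k} :
  series_on (og_lt G) (fun x => A 0 x /\ og_lt G (og_one G) x) f -> f <> (fun _ => 0) ->
  (forall h, A 0 h -> series_lt (og_lt G) (l h) f) \/
  (forall h, A 0 h -> series_lt (og_lt G) (l h) (fun x => - f x)).
Proof.
move=> Sf f0; have growth h Ah := proj2 (proj2 GA0) h Ah f Sf f0.
have [pos|npos] := classic (series_lt (og_lt G) (fun _ => 0) f).
- by left=> h /growth; rewrite (sabs_pos pos).
- by right=> h /growth; rewrite (sabs_npos npos).
Qed.

(* The exponents of [l(b)], for [b] in [G^0_m], are bounded by [G^0_m]: they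
   lie below any [h > 1] in [G^0_m], since [l(b^{+-1}) < h] by growth. *)
Lemma l_support_bounded {b x} : A 0 b -> l b x <> 0 -> exists y, A 0 y /\ lle (T 0) x y.
Proof.
move=> Ab lbx; have [[_ [_ [_ AN]]] [[h0 [Ah0 h0n]] growth]] := GA0.
have [h [Ah h1]] : exists h, A 0 h /\ og_lt G (og_one G) h.
  case: (og_lt_total G h0 (og_one G)) => [h01|[//|]]; last by exists h0.
  by exists (og_inv G h0); split; [apply: AN | apply: og_inv_gt1].
exists h; split=> //; case: (og_lt_total G x h) => [|[|hx]]; [by left|by right|].
have Smono := monomial_series (k := k) (fun x => A 0 x /\ og_lt G (og_one G) x) h (conj Ah h1).
have below g : A 0 g -> series_lt (og_lt G) (l g) (monomial h).
  move=> Ag; have := growth g Ag _ Smono; rewrite sabs_pos; last exact: monomial_pos.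
  apply=> mono0; have := f_equal (fun f => f h) mono0.
  by rewrite /monomial /=; case: excluded_middle_informative => // _ /eqP; rewrite oner_eq0.
have lb0 : l b <> (fun _ => 0) by move=> lb0; apply: lbx; rewrite lb0.
have Slb := proj2 (proj2 P) b.
have [x1 [lbx1 above]] := leading_ex Slb lb0.
have hx1 : og_lt G h x1.
  case: (og_lt_total G x x1) => [xx1|[<- //|x1x]]; first exact: og_lt_trans hx xx1.
  by case: lbx; apply: above.
have Smono' := monomial_series (k := k) _ h h1.
exfalso; have /lt_total/orP[neg|pos] : l b x1 != 0 by apply/eqP.
- have := below _ (AN _ Ab); rewrite (l_inv P) => lt_mono.
  apply: (og_slt_asym (series_on_opp Slb) Smono' lt_mono).
  apply: monomial_lt_leading hx1; last by rewrite oppr_gt0.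
  split=> [lbx1'|y /above ->]; last by rewrite oppr0.
  by apply: lbx1; rewrite -[l b x1]opprK lbx1' oppr0.
- apply: (og_slt_asym Slb Smono' (below _ Ab)).
  exact: monomial_lt_leading (conj lbx1 above) pos hx1.
Qed.

Lemma support_bounded {n a x} : A n.+1 a -> a x <> 0 -> exists y, A n y /\ lle (T n) x y.
Proof.
elim: n a x => [|n IH] a x [b [al [Ab [Sal ->]]]] /= /addr_neq0 [bx|alx];
  try by exists x; split; [exact: (proj1 (proj1 Sal x alx)) | right].
  exact: l_support_bounded Ab bx.
have [x' [-> bx']] := push_supp _ (lsh_inj P n) bx.
have [y' [Ay' x'y']] := IH _ _ Ab bx'.
exists (lsh l n y'); split; first exact: LE_embed.
case: x'y' => [x'y'|->]; last by right.
left; apply/(lsh_lt_iff P _ _ _ (proj1 (proj1 (LE_mem Ab) x' bx')) (LE_mem Ay')).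
exact: x'y'.
Qed.

Lemma lsh_support_below {n c x0 y} : A n.+1 c -> Above n.+1 x0 -> lsh l n.+1 c y <> 0 ->
  lmem (T n.+1) y /\ llt (T n.+1) y x0.
Proof.
move=> Ac [Ax0 x0above] cy.
have [x' [-> cx']] := push_supp _ (lsh_inj P n) cy.
have mx' := proj1 (proj1 (LE_mem Ac) x' cx').
split; first exact: lsh_mem.
have [y' [Ay' [x'y'|->]]] := support_bounded Ac cx'; last exact: x0above.
apply: (lv_trans (tower_ok P n.+1) (lsh_mem P _ _ mx') (lsh_mem P _ _ (LE_mem Ay'))
  (LE_mem Ax0) _ (x0above _ Ay')).
by apply/(lsh_lt_iff P _ _ _ mx' (LE_mem Ay')).
Qed.

Lemma lsh_vanishes_above {n c x0 w} : A n.+1 c -> Above n.+1 x0 -> lle (T n.+1) x0 w ->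
  lsh l n.+1 c w = 0.
Proof.
move=> Ac Ax0 x0w; apply: NNPP => cw.
have [mw wx0] := lsh_support_below Ac Ax0 cw.
exact: lle_lt_false (tower_ok P _) mw (LE_mem (proj1 Ax0)) wx0 x0w.
Qed.

(* An element [l a + alpha] of [G^1_m] lying between two elements of [G^0_m]
   has [alpha = 0]: by growth, [alpha] dominates every [l h], [h] in [G^0_m]. *)
Lemma LE_convex0 : convex_in (T 1) (embed l 0 (A 0)) (A 1).
Proof.
move=> _ _ z [a1 [Aa1 ->]] [a2 [Aa2 ->]] Az le1 le2.
have [a [al [Aa [Sal ez]]]] := Az.
have [al0|al_n0] := classic (al = fun _ => 0).
  by exists a; split=> //; rewrite ez al0; apply: functional_extensionality => x /=; rewrite addr0.
exfalso; have [[_ [_ [AD AN]]] _] := GA0.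
have ml u : lmem (T 1) (l u) := lsh_mem P 0 u I.
have ez1 : (fun x => l a x + al x) = z by rewrite ez.
have ez2 : (fun x => al x + l a x) = z.
  by rewrite -ez1; apply: functional_extensionality => x; rewrite addrC.
case: (growth0 Sal al_n0) => [pos|neg].
- have := pos _ (AD _ _ Aa2 (AN _ Aa)); rewrite (l_div P) => /slt_subr; rewrite ez2 => z_gt.
  exact: (lle_lt_false (tower_ok P 1) (ml a2) (LE_mem Az) z_gt le2).
- have := neg _ (AD _ _ Aa (AN _ Aa1)); rewrite (l_div P) => /slt_subr /(slt_addr _ _ al).
  have -> : (fun x => - al x + l a1 x + al x) = l a1.
    by apply: functional_extensionality => x; rewrite addrAC addNr add0r.
  rewrite ez1 => z_lt.
  exact: (lle_lt_false (tower_ok P 1) (LE_mem Az) (ml a1) z_lt le1).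
Qed.

(* At higher levels, in [l^{#(n+1)}(b) + alpha] the leading monomial of a
   nonzero [alpha] dominates every [l^{#(n+1)}(c)], [c] in [G^{n+1}_m]. *)
Lemma LE_convexS n : convex_in (T n.+2) (embed l n.+1 (A n.+1)) (A n.+2).
Proof.
move=> _ _ z [b1 [Ab1 ->]] [b2 [Ab2 ->]] Az le1 le2.
have [b [al [Ab [Sal ez]]]] := Az.
have [al0|al_n0] := classic (al = fun _ => 0).
  by exists b; split=> //; rewrite ez al0; apply: functional_extensionality => x /=; rewrite addr0.
have [x0 [alx0 above]] := leading_ex Sal al_n0.
have Ax0 : Above n.+1 x0 := proj1 Sal x0 alx0.
have vanish c w : A n.+1 c -> lle (T n.+1) x0 w -> push (lsh l n) c w = 0.
  by move=> Ac; apply: lsh_vanishes_above.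
have zx0 : z x0 = al x0 by rewrite ez /= (vanish b) ?add0r //; right.
have zw w : llt (T n.+1) x0 w -> z w = 0.
  by move=> x0w; rewrite ez /= (vanish b) ?above ?addr0 //; left.
have [mz mb1 mb2] : [/\ lmem (T n.+2) z, lmem (T n.+2) (lsh l n.+1 b1)
                     & lmem (T n.+2) (lsh l n.+1 b2)].
  by split; [exact: LE_mem Az | apply/lsh_mem/LE_mem.. ].
exfalso; have /lt_total/orP[neg|pos] : al x0 != 0 by apply/eqP.
- apply: (lle_lt_false (tower_ok P _) mz mb1 _ le1); exists x0.
  split; first by rewrite /= zx0 (vanish b1) //; right.
  by move=> w x0w; rewrite /= zw // (vanish b1) //; left.
- apply: (lle_lt_false (tower_ok P _) mb2 mz _ le2); exists x0.
  split; first by rewrite /= zx0 (vanish b2) //; right.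
  by move=> w x0w; rewrite /= zw // (vanish b2) //; left.
Qed.

Lemma LE_convex n : convex_in (T n.+1) (embed l n (A n)) (A n.+1).
Proof. by case: n => [|n]; [exact: LE_convex0 | exact: LE_convexS]. Qed.

Lemma LE_disjoint n z : embed l n (A n) z -> ExpSet n (Above n) z -> z = lone (T n.+1).
Proof.
case: n z => [|n] _ [g [Ag ->]] Sg.
  apply: NNPP => lg0; have [[_ [_ [_ AN]]] _] := GA0.
  case: (growth0 Sg lg0) => [/(_ g Ag)|/(_ _ (AN g Ag))]; last rewrite (l_inv P);
    exact: slt_irr.
apply: functional_extensionality => y; apply: NNPP => gy.
have [_ yy] := lsh_support_below Ag (proj1 Sg y gy) gy.
exact: lv_irr (tower_ok P _) _ yy.
Qed.

(* [Exp k(((G^n_m)^{>1}))] is contained in [G^{n+1}_m]: split [alpha] into its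
   part above [G^{n-1}_m] and the rest; by convexity the rest is supported in
   [(G^{n-1}_m)^{>1}], so by induction it is [l^{#(n-1)}] of an element of [G^n_m]. *)
Lemma expset_in_next n alpha :
  ExpSet n (fun x => A n x /\ llt (T n) (lone (T n)) x) alpha -> A n.+1 alpha.
Proof.
elim: n alpha => [|n IH] al Sal.
  exists (og_one G), al; split; first exact: (LE_one 0).
  by split=> //; apply: functional_extensionality => x /=; rewrite (l_one P) add0r.
pose gam := restrict (Above n.+1) al.
pose bet := restrict (fun x => ~ Above n.+1 x) al.
have bet_img x : bet x <> 0 ->
    exists x', x = lsh l n x' /\ A n x' /\ llt (T n) (lone (T n)) x'.
  move=> betx; have [not_above /(proj1 Sal) [Ax x1]] := restrict_supp betx.
  have [y [Ay yx]] : exists y, A n y /\ ~ llt (T n.+1) (lsh l n y) x.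
    apply: NNPP => N; apply: not_above; split; first exact: Ax.
    by move=> y Ay; apply: NNPP => yx; apply: N; exists y.
  have mx := LE_mem Ax; have my := lsh_mem P _ _ (LE_mem Ay).
  have le2 : lle (T n.+1) x (lsh l n y).
    by case: (lv_total (tower_ok P _) mx my) => [|[|//]]; [left|right].
  have le1 : lle (T n.+1) (lsh l n (lone (T n))) x by left; rewrite (lsh_one P).
  have [x' [Ax' ex']] := LE_convex n _ _ _ (ex_intro _ _ (conj (LE_one n) erefl))
    (ex_intro _ _ (conj Ay erefl)) Ax le1 le2.
  exists x'; do 2 split=> //.
  by apply/(lsh_lt_iff P _ _ _ (LE_mem (LE_one n)) (LE_mem Ax')); rewrite (lsh_one P) -ex'.
pose r x' := bet (lsh l n x').
have Sr : series_on (llt (T n)) (fun x => A n x /\ llt (T n) (lone (T n)) x) r.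
  have r_supp x' : r x' <> 0 -> A n x' /\ llt (T n) (lone (T n)) x'.
    by move=> /bet_img [x'' [/lsh_inj -> //]].
  split=> //; apply: (proj2 (series_on_pullback (lsh l n) _ (series_on_restrict _ Sal))).
  move=> x y /r_supp [Ax _] /r_supp [Ay _].
  exact: (proj1 (lsh_lt_iff P _ _ _ (LE_mem Ax) (LE_mem Ay))).
exists r, gam; split; first exact: IH.
split; first by apply: series_on_weaken (series_on_restrict _ Sal) => x [].
have ebet : push (lsh l n) r = bet.
  by apply: (push_pullback _ (lsh_inj P n)) => y /bet_img [x' [-> _]]; exists x'.
by rewrite [LHS](restrict_split (Above n.+1)) -/bet -ebet.
Qed.

End LEConstruction.

Theorem proposition9 (k : realFieldType) (log : k -> k) (G : ogroup)
  (l : G -> G -> k) (psi : G -> G) (H : G -> Prop) :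
  is_surj_log log -> prelog_section l -> lmorphism l psi -> growth_axiom l H ->
  forall m : nat,
    growth_axiom l (Gnm l psi H m 0) /\
    (forall n : nat,
       antilex_product (tower k G n.+1) (Gnm l psi H m n.+1)
         (embed l n (Gnm l psi H m n))
         (ExpSet n (Gnm_above l psi H m n))) /\
    (forall n : nat,
       forall alpha : lR (tower k G n.+1),
         ExpSet n (fun x => Gnm l psi H m n x /\
                          llt (tower k G n) (lone (tower k G n)) x) alpha ->
         Gnm l psi H m n.+1 alpha).
Proof.
move=> _ P M GA m.
have GA0 : growth_axiom l (Gnm l psi H m 0).
  exact: growth_image l (iter m psi) H (lmorphism_iter l psi m M) GA.
split=> //; split; last by move=> n; apply: expset_in_next.
move=> n; have [An Abn] := LE_subgroup P GA0 n.
split; first exact: (embed_subgroup (tower_emb P n) _ An).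
split; first exact: (expset_subgroup (tower_ok P n) Abn).
split; first exact: (proj1 (LE_subgroup P GA0 n.+1)).
split.
  move=> z; split=> [[a [al [Aa [Sal ->]]]]|[_ [al [[a [Aa ->]] [Sal ->]]]]].
  - by exists (lsh l n a), al; split; [exists a|].
  - by exists a, al.
split; [exact: LE_disjoint | exact: LE_convex].
Qed.
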